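(* Let $A$ be a finite abelian group, let $H$ be a subgroup of $A$, let $A_2$ be the Sylow $2$-subgroup of $A$ and $H_2$ the Sylow $2$-subgroup of $H$. If $\Gamma_{A,H}$ admits a perfect code, then $\Gamma_{A_2,H_2}$ admits a perfect code.
   Context: Abelian groups are written additively with identity $0$. For a subgroup $H$ of a finite abelian group $A$, the subgroup sum graph $\Gamma_{A,H}$ is the simple undirected graph with vertex set $A$ in which distinct vertices $x,y$ are adjacent if and only if $x+y\in H\setminus\{0\}$. A perfect code in a graph is a set $C$ of vertices that is independent and such that every vertex not in $C$ is adjacent to exactly one vertex of $C$. *)

From mathcomp Require Import all_boot all_fingroup all_solvable.
Set Implicit Arguments. Unset Strict Implicit. Unset Printing Implicit Defensive.
Local Open Scope group_scope.

(* Groups are written multiplicatively (fingroup convention): the abelian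
   group operation "+" of the paper is "*", and the identity 0 is 1. *)

Definition ssg_adj (gT : finGroupType) (H : {set gT}) (x y : gT) : bool :=
  (x != y) && (x * y \in H :\ 1).

Definition perfect_code (gT : finGroupType) (A H C : {set gT}) : Prop :=
  [/\ C \subset A,
      (forall x y, x \in C -> y \in C -> ~~ ssg_adj H x y) &
      (forall x, x \in A :\: C -> #|[set c in C | ssg_adj H x c]| = 1%N)].

Definition admits_perfect_code (gT : finGroupType) (A H : {set gT}) : Prop :=
  exists C : {set gT}, perfect_code A H C.

From mathcomp Require Import all_boot all_fingroup all_solvable.
Set Implicit Arguments. Unset Strict Implicit. Unset Printing Implicit Defensive.
Local Open Scope group_scope.

(* In an abelian group A, the graph Gamma_{A,H} splits into components
   xH \cup x^-1 H.  If x^2 \notin H this component is a complete bipartite graph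
   minus the perfect matching y <-> y^-1, and {y, y^-1} is a perfect code of
   it.  If x^2 \in H it is the complete graph on the coset xH minus the same
   matching; it has a perfect code exactly when xH contains an element y with
   y^2 = 1 (take {y}) or |H| <= 2.  So Gamma_{A,H} admits a perfect code iff
   |H| <= 2 or every coset xH with x^2 \in H contains such a y.  The latter
   condition passes to the Sylow 2-subgroups, because y^2 = 1 forces y into
   them, and |H_2| <= 2 gives the code directly. *)

Definition square_cosets_have_involutions (gT : finGroupType) (A H : {set gT}) : Prop :=
  forall x, x \in A -> x ^+ 2 \in H -> exists2 y, y \in x *: H & y ^+ 2 = 1.

Definition involution_rep (gT : finGroupType) (S : {set gT}) : gT :=
  if [pick y in S | y ^+ 2 == 1] is Some y then y else odflt 1 [pick y in S].

Lemma involution_rep_mem (gT : finGroupType) (S : {set gT}) x :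
  x \in S -> involution_rep S \in S.
Proof.
rewrite /involution_rep => xS; case: pickP => [y /andP[] // | _].
by case: pickP => [y // | /(_ x)]; rewrite xS.
Qed.

Lemma involution_rep_sqr (gT : finGroupType) (S : {set gT}) y :
  y \in S -> y ^+ 2 = 1 -> involution_rep S ^+ 2 = 1.
Proof.
rewrite /involution_rep => yS y2; case: pickP => [z /andP[_ /eqP] // | /(_ y)].
by rewrite yS y2 eqxx.
Qed.

Lemma cards1_set2_filter (T : finType) (p : pred T) u v :
  p u || p v -> (p u && p v -> u = v) -> #|[set c in [set u; v] | p c]| = 1%N.
Proof.
move=> puv uniq_uv; apply/eqP/cards1P.
have [pu | npu] := boolP (p u).
  exists u; apply/setP=> c; rewrite !inE.
  have [-> | ncu] := eqVneq c u; first by rewrite pu.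
  have [cv | //] := eqVneq c v; rewrite cv in ncu *.
  by apply: contra_neqF ncu => pv; rewrite (uniq_uv _) ?pu.
exists v; apply/setP=> c; rewrite !inE; move: puv; rewrite (negbTE npu) /= => pv.
have [-> | ncv] := eqVneq c v; first by rewrite pv orbT.
by have [-> | //] := eqVneq c u; rewrite (negbTE npu).
Qed.

Section SubgroupSumGraph.

Variables (gT : finGroupType) (A H : {group gT}).
Hypotheses (cAA : abelian A) (sHA : H \subset A).

Let commA x y : x \in A -> y \in A -> commute x y.
Proof. by move=> xA yA; apply: (centsP cAA). Qed.

Lemma ssg_adjE x y : x * y \in H -> ssg_adj H x y = (x != y) && (x * y != 1).
Proof. by move=> xyH; rewrite /ssg_adj !inE xyH andbT. Qed.

Lemma ssg_adj_mem x y : ssg_adj H x y -> x * y \in H.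
Proof. by case/andP=> _; rewrite !inE => /andP[]. Qed.

Lemma mem_lcoset_group x y : x \in A -> y \in x *: H -> y \in A.
Proof.
by rewrite mem_lcoset => xA xyH; rewrite -(mulKVg x y) groupM // (subsetP sHA).
Qed.

Lemma mem_lcosetV x y : x \in A -> y \in x *: H -> y^-1 \in x^-1 *: H.
Proof.
move=> xA yxH; have yA := mem_lcoset_group xA yxH.
move: yxH; rewrite !mem_lcoset invgK -groupV invMg invgK.
by rewrite (commA (groupVr yA) xA).
Qed.

Lemma lcosetV_sqr x : x ^+ 2 \in H -> x^-1 *: H = x *: H.
Proof. by move=> x2H; apply/lcoset_eqP; rewrite mem_lcoset -invMg groupV. Qed.

Lemma perfect_code_nbr C x :
  perfect_code A H C -> x \in A -> x \notin C -> exists2 c, c \in C & ssg_adj H x c.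
Proof.
case=> _ _ domC xA xC; have := domC x; rewrite inE xC xA => /(_ isT)/eqP/cards1P[c Nx].
by have := set11 c; rewrite -Nx inE => /andP[]; exists c.
Qed.

Lemma ssg_adj_sqr_lcoset x y z : x \in A -> x ^+ 2 \in H ->
  y \in x *: H -> z \in x *: H -> ssg_adj H y z = (y != z) && (y * z != 1).
Proof.
move=> xA x2H yS zS; apply: ssg_adjE.
have := mem_lcosetV xA yS; rewrite lcosetV_sqr // !mem_lcoset in zS * => yVH.
have -> : y * z = (x^-1 * y^-1)^-1 * (x^-1 * z) by rewrite invMg !invgK mulgA mulgK.
by rewrite groupM ?groupV.
Qed.

Lemma perfect_code_square_cosets C :
  perfect_code A H C -> (2 < #|H|)%N -> square_cosets_have_involutions A H.
Proof.
move=> codeC H_gt2 x xA x2H; set S := x *: H.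
have [y /andP[yS /eqP y2] | no_inv] := pickP [pred y in S | y ^+ 2 == 1].
  by exists y.
exfalso; case: (codeC) => sCA indepC domC.
have SV y : y \in S -> y^-1 \in S.
  by move=> yS; rewrite /S -(lcosetV_sqr x2H) mem_lcosetV.
have adjS y z : y \in S -> z \in S -> ssg_adj H y z = (y != z) && (y * z != 1).
  exact: ssg_adj_sqr_lcoset.
have [c cC cS] : exists2 c, c \in C & c \in S.
  have [xC | xC] := boolP (x \in C); first by exists x; rewrite ?lcoset_refl.
  have [c cC /ssg_adj_mem xcH] := perfect_code_nbr codeC xA xC.
  by exists c; rewrite // /S -(lcosetV_sqr x2H) mem_lcoset invgK.
have cVS := SV c cS; have cA := mem_lcoset_group xA cS.
have c_neqV : c != c^-1.
  by have := no_inv c; rewrite /= cS => /negbT c2_neq1; rewrite eq_mulgV1 invgK.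
have [cVC | cVC] := boolP (c^-1 \in C).
  have [w wS] : exists2 w, w \in S & w \notin [set c; c^-1].
    apply/subsetPn; apply: contraTN H_gt2 => /subset_leq_card.
    by rewrite card_lcoset cards2 c_neqV -leqNgt.
  rewrite !inE negb_or => /andP[w_neq_c w_neq_cV].
  have adj_wc : ssg_adj H w c by rewrite adjS // w_neq_c -[c in w * c]invgK -eq_mulgV1.
  have adj_wcV : ssg_adj H w c^-1 by rewrite adjS // w_neq_cV -eq_mulgV1.
  have wC : w \notin C by apply: contraL adj_wc => wC; apply: indepC.
  have := domC w; rewrite inE wC (mem_lcoset_group xA wS) => /(_ isT) Nw.
  have : [set c; c^-1] \subset [set d in C | ssg_adj H w d].
    by apply/subsetP=> d /set2P[] ->; rewrite inE ?cC ?cVC.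
  by move/subset_leq_card; rewrite Nw cards2 c_neqV.
have [d dC adj_cVd] := perfect_code_nbr codeC (groupVr cA) cVC.
have dS : d \in S.
  by rewrite /S -(lcoset_eqP cS) mem_lcoset; apply: ssg_adj_mem.
have := indepC c d cC dC; rewrite adjS // (eq_mulVg1 c d) -(eq_invg_mul c d) andbC.
by rewrite adjS // in adj_cVd; rewrite adj_cVd.
Qed.

Definition ssg_class x : {set gT} := x *: H :|: x^-1 *: H.

Lemma ssg_class_refl x : x \in ssg_class x.
Proof. by rewrite inE lcoset_refl. Qed.

Lemma ssg_class_nbr x y : x * y \in H -> y \in ssg_class x.
Proof. by move=> xyH; rewrite inE !mem_lcoset invgK xyH orbT. Qed.

Lemma mem_ssg_class_group x y : x \in A -> y \in ssg_class x -> y \in A.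
Proof. by move=> xA; rewrite inE => /orP[]; apply: mem_lcoset_group; rewrite ?groupV. Qed.

Lemma ssg_class_lcoset x y : x \in A -> y \in x *: H -> ssg_class y = ssg_class x.
Proof.
by move=> xA yxH; rewrite /ssg_class (lcoset_eqP yxH) (lcoset_eqP (mem_lcosetV xA yxH)).
Qed.

Lemma ssg_class_eq x y : x \in A -> y \in ssg_class x -> ssg_class y = ssg_class x.
Proof.
move=> xA; rewrite inE => /orP[/(ssg_class_lcoset xA) // |].
by move/(ssg_class_lcoset (groupVr xA))->; rewrite /ssg_class invgK setUC.
Qed.

Definition ssg_rep x : gT := involution_rep (ssg_class x).

Lemma ssg_rep_class x : ssg_rep x \in ssg_class x.
Proof. exact: involution_rep_mem (ssg_class_refl x). Qed.

Definition ssg_code : {set gT} := [set y in A | y \in [set ssg_rep y; (ssg_rep y)^-1]].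

Lemma mem_ssg_code x c : x \in A -> c \in ssg_class x ->
  (c \in ssg_code) = (c \in [set ssg_rep x; (ssg_rep x)^-1]).
Proof.
by move=> xA cx; rewrite inE (mem_ssg_class_group xA cx) /ssg_rep (ssg_class_eq xA cx).
Qed.

Lemma ssg_code_indep x y : x \in ssg_code -> y \in ssg_code -> ~~ ssg_adj H x y.
Proof.
move=> xC yC; apply/negP=> adj_xy; have xyH := ssg_adj_mem adj_xy.
have xA : x \in A by case/setIdP: xC.
rewrite (mem_ssg_code xA (ssg_class_nbr xyH)) in yC.
rewrite (mem_ssg_code xA (ssg_class_refl x)) in xC.
move: adj_xy; rewrite ssg_adjE //.
by case/set2P: xC => ->; case/set2P: yC => ->; rewrite ?mulgV ?mulVg eqxx ?andbF.
Qed.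

Lemma ssg_code_nbrs x : x \in A -> x \notin ssg_code ->
  [set c in ssg_code | ssg_adj H x c]
    = [set c in [set ssg_rep x; (ssg_rep x)^-1] | x * c \in H].
Proof.
move=> xA; rewrite (mem_ssg_code xA (ssg_class_refl x)); set U := [set _; _] => xU.
apply/setP=> c; rewrite [in RHS]inE [in LHS]inE.
have [xcH | xcH] := boolP (x * c \in H); last first.
  by rewrite andbF; apply/negbTE; apply: contra xcH => /andP[_ /ssg_adj_mem].
rewrite (mem_ssg_code xA (ssg_class_nbr xcH)) -/U ssg_adjE // andbT.
have [cU /= | //] := boolP (c \in U); apply/andP; split.
  by apply: contraNneq _ xU => ->.
apply: contra xU => /eqP xc1; have -> : x = c^-1 by rewrite -(mulgK c x) xc1 mul1g.
by case/set2P: cU => ->; rewrite ?invgK !inE eqxx ?orbT.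
Qed.

Lemma ssg_rep_sqr x : (#|H| <= 2)%N \/ square_cosets_have_involutions A H ->
  x \in A -> x \notin [set ssg_rep x; (ssg_rep x)^-1] ->
  x * ssg_rep x \in H -> x * (ssg_rep x)^-1 \in H -> ssg_rep x ^+ 2 = 1.
Proof.
move=> small_or_inv xA; have ux := ssg_rep_class x; set u := ssg_rep x in ux *.
move=> xU xuH xuVH; have uA := mem_ssg_class_group xA ux.
have u2H : u ^+ 2 \in H.
  have -> : u ^+ 2 = (x * u^-1)^-1 * (x * u) by rewrite invMg invgK mulgA mulgKV.
  by rewrite groupM ?groupV.
case: small_or_inv => [H_le2 | sqr_inv].
  apply/eqP; apply: contraLR H_le2 => u2_neq1; rewrite -ltnNge -(card_lcoset H u).
  apply/card_gt2P; exists u, u^-1, x; split; split.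
  - exact: lcoset_refl.
  - by rewrite mem_lcoset -invMg groupV.
  - by rewrite mem_lcoset -(commA xA (groupVr uA)).
  - by rewrite eq_mulgV1 invgK.
  - by apply: contraNneq _ xU => <-; rewrite !inE eqxx orbT.
  - by apply: contraNneq _ xU => ->; rewrite !inE eqxx.
have [y yuH y2] := sqr_inv u uA u2H.
by apply: (involution_rep_sqr _ y2); rewrite -(ssg_class_eq xA ux) inE yuH.
Qed.

Lemma ssg_code_dom x : (#|H| <= 2)%N \/ square_cosets_have_involutions A H ->
  x \in A :\: ssg_code -> #|[set c in ssg_code | ssg_adj H x c]| = 1%N.
Proof.
move=> small_or_inv /setDP[xA xC]; rewrite ssg_code_nbrs //.
rewrite (mem_ssg_code xA (ssg_class_refl x)) in xC.
have := ssg_rep_class x; set u := ssg_rep x in xC * => ux.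
apply: cards1_set2_filter.
  move: ux; rewrite inE => /orP[/(mem_lcosetV xA) | ];
  by rewrite mem_lcoset invgK => ->; rewrite ?orbT.
case/andP=> xuH xuVH; have u2 := ssg_rep_sqr small_or_inv xA xC xuH xuVH.
by rewrite -[u^-1]mul1g -u2 expg2 mulgK.
Qed.

Lemma ssg_code_perfect : (#|H| <= 2)%N \/ square_cosets_have_involutions A H ->
  perfect_code A H ssg_code.
Proof.
move=> small_or_inv; split; first by apply/subsetP=> y /setIdP[].
  exact: ssg_code_indep.
by move=> x; apply: ssg_code_dom.
Qed.

End SubgroupSumGraph.

Lemma mem_Syl_abelian (gT : finGroupType) p (G P : {group gT}) x :
  abelian G -> P \in 'Syl_p(G) -> x \in G -> (x \in P) = p.-elt x.
Proof.
move=> cGG; rewrite inE => sylP; apply: mem_normal_Hall (sylP) _.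
by rewrite -sub_abelian_normal // (pHall_sub sylP).
Qed.

Lemma Syl_abelian_sub (gT : finGroupType) p (A H Ap Hp : {group gT}) :
  abelian A -> H \subset A -> Ap \in 'Syl_p(A) -> Hp \in 'Syl_p(H) -> Hp \subset Ap.
Proof.
move=> cAA sHA sylAp sylHp; have /[!inE] sylHp' := sylHp.
apply/subsetP=> x xHp; have xH := subsetP (pHall_sub sylHp') x xHp.
rewrite (mem_Syl_abelian cAA sylAp) ?(subsetP sHA) //.
exact: mem_p_elt (pHall_pgroup sylHp') xHp.
Qed.

Lemma square_cosets_have_involutions_Syl2 (gT : finGroupType) (A H A2 H2 : {group gT}) :
  abelian A -> H \subset A -> A2 \in 'Syl_2(A) -> H2 \in 'Syl_2(H) ->
  square_cosets_have_involutions A H -> square_cosets_have_involutions A2 H2.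
Proof.
move=> cAA sHA sylA2 sylH2 invAH u uA2 u2H2.
have /[!inE] hallA2 := sylA2; have /[!inE] hallH2 := sylH2.
have uA := subsetP (pHall_sub hallA2) u uA2.
have [y yuH y2] := invAH u uA (subsetP (pHall_sub hallH2) _ u2H2).
have yA2 : y \in A2.
  rewrite (mem_Syl_abelian cAA sylA2) ?(mem_lcoset_group sHA uA yuH) //.
  by apply: pnat_dvd (pnat_id (isT : prime 2)); rewrite order_dvdn y2.
exists y => //; rewrite mem_lcoset in yuH; rewrite mem_lcoset.
rewrite (mem_Syl_abelian (abelianS sHA cAA) sylH2 yuH).
by apply: mem_p_elt (pHall_pgroup hallA2) _; rewrite groupM ?groupV.
Qed.

Theorem proposition3p4 (gT : finGroupType) (A H A2 H2 : {group gT}) :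
  abelian A -> H \subset A ->
  A2 \in 'Syl_2(A) -> H2 \in 'Syl_2(H) ->
  admits_perfect_code A H -> admits_perfect_code A2 H2.
Proof.
move=> cAA sHA sylA2 sylH2 [C codeC].
have sA2A : A2 \subset A by move: sylA2; rewrite inE => /pHall_sub.
have sH2H : H2 \subset H by move: sylH2; rewrite inE => /pHall_sub.
exists (ssg_code A2 H2); apply: ssg_code_perfect.
- exact: abelianS sA2A cAA.
- exact: Syl_abelian_sub sylA2 sylH2.
have [|H2_gt2] := leqP #|H2| 2; [by left | right].
apply: square_cosets_have_involutions_Syl2 sylA2 sylH2 _ => //.
apply: perfect_code_square_cosets codeC _ => //.
exact: leq_trans H2_gt2 (subset_leq_card sH2H).
Qed.
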